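(* Let $(p_n)_{n\ge1}$ be a strictly increasing sequence of odd primes and let $G=\big\langle \frac{1}{2^np_n} : n\in\mathbb N\big\rangle$ be the additive submonoid of $\mathbb Q_{\ge0}$ they generate. Then $\mathcal A(G)=\{\frac1{2^np_n}: n\in\mathbb N\}$, and $G$ is neither a BFM nor an IDF monoid.
   Context: Monoids are commutative, cancellative, with identity, written additively. $\mathcal A(G)$ is the set of atoms (nonunits not expressible as a sum of two nonunits). $G$ is a BFM if every element is a finite sum of atoms and has only finitely many factorization lengths; $G$ is IDF if every element is divisible (in $G$) by only finitely many atoms. *)

From mathcomp Require Import all_boot all_order all_algebra.
Set Implicit Arguments. Unset Strict Implicit. Unset Printing Implicit Defensive.
Import Order.TTheory GRing.Theory Num.Theory.
Local Open Scope ring_scope.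

Definition gen (p : nat -> nat) (n : nat) : rat := ((2 ^ n * p n)%N%:R)^-1.

(* G = <1/(2^n p_n) : n >= 1>: the finite N-combinations (sums of a finite
   multiset of generators, empty sum = 0). *)
Definition inG (p : nat -> nat) (x : rat) : Prop :=
  exists s : seq nat, all (fun n => 0 < n)%N s /\ x = \sum_(n <- s) gen p n.

Definition is_unit (M : rat -> Prop) (u : rat) : Prop :=
  M u /\ exists v, M v /\ u + v = 0.

Definition is_atom (M : rat -> Prop) (a : rat) : Prop :=
  M a /\ ~ is_unit M a /\
  ~ (exists b c, M b /\ M c /\ ~ is_unit M b /\ ~ is_unit M c /\ a = b + c).

Definition is_factorization (M : rat -> Prop) (x : rat) (s : seq rat) : Prop :=
  (forall a, a \in s -> is_atom M a) /\ x = \sum_(a <- s) a.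

Definition BFM (M : rat -> Prop) : Prop :=
  forall x, M x ->
    (exists s, is_factorization M x s) /\
    (exists L : seq nat, forall s, is_factorization M x s -> size s \in L).

Definition divides_in (M : rat -> Prop) (a x : rat) : Prop :=
  exists y, M y /\ x = a + y.

Definition IDF (M : rat -> Prop) : Prop :=
  forall x, M x ->
    exists l : seq rat, forall a, is_atom M a -> divides_in M a x -> a \in l.

(* The generators are distinct positive rationals, so the only units of G are
   0.  If a generator 1/(2^n p_n) were a sum of other generators, clearing the
   denominators 2^k p_k of the summands would make the odd prime p_n divide
   some 2^k p_k with k <> n, i.e. p_n = p_k, which monotonicity forbids; hence
   the generators are exactly the atoms.  Finally 1 = (2^n p_n) * 1/(2^n p_n)
   for every n: 1 has factorizations of unbounded length and is divisible by
   every atom. *)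
From mathcomp Require Import all_boot all_order all_algebra.
Import Order.TTheory GRing.Theory Num.Theory.
Local Open Scope ring_scope.

Lemma strict_mono_inj_pos {f : nat -> nat} :
  (forall m n, (0 < m)%N -> (m < n)%N -> (f m < f n)%N) ->
  {in [pred n | 0 < n]%N &, injective f}.
Proof.
move=> f_lt m n m_gt0 n_gt0 fmn.
case: (ltngtP m n) => // [/(f_lt _ _ m_gt0)|/(f_lt _ _ n_gt0)];
  by rewrite fmn ltnn.
Qed.

Section PrimeReciprocalMonoid.
Set Implicit Arguments.
Unset Strict Implicit.

Variable p : nat -> nat.
Hypothesis p_prime_odd : forall n : nat, (1 <= n)%N -> prime (p n) /\ odd (p n).
Hypothesis p_incr : forall m n : nat, (1 <= m)%N -> (m < n)%N -> (p m < p n)%N.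

Let pos := [pred n : nat | 0 < n]%N.

Definition den (n : nat) : nat := (2 ^ n * p n)%N.

Lemma den_gt0 n : (0 < n)%N -> (0 < den n)%N.
Proof.
move=> n_gt0; have [p_pr _] := p_prime_odd n_gt0.
by rewrite muln_gt0 expn_gt0 (prime_gt0 p_pr).
Qed.

Lemma den_neq0 n : (0 < n)%N -> (den n)%:R != 0 :> rat.
Proof. by move=> n_gt0; rewrite pnatr_eq0 -lt0n den_gt0. Qed.

Lemma gen_ge0 n : 0 <= gen p n.
Proof. by rewrite invr_ge0 ler0n. Qed.

Lemma gen_gt0 n : (0 < n)%N -> 0 < gen p n.
Proof. by move=> n_gt0; rewrite invr_gt0 ltr0n den_gt0. Qed.

Lemma mul_den_gen n : (0 < n)%N -> (den n)%:R * gen p n = 1.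
Proof. by move=> n_gt0; rewrite mulfV ?den_neq0. Qed.

Lemma gen_inj : {in pos &, injective (gen p)}.
Proof.
have den_lt m n : (0 < m)%N -> (m < n)%N -> (den m < den n)%N.
  by move=> m_gt0 mn; rewrite ltn_mul ?ltn_exp2l ?p_incr.
move=> m n m_gt0 n_gt0 /invr_inj /eqP; rewrite eqr_nat => /eqP.
exact: (strict_mono_inj_pos den_lt _ _ m_gt0 n_gt0).
Qed.

Lemma sum_gen_eq0 s :
  all pos s -> (\sum_(k <- s) gen p k == 0) = (s == [::]).
Proof.
rewrite psumr_eq0 => [|k _]; last exact: gen_ge0.
by case: s => [|k s] //= /andP[/gen_gt0/gt_eqF ->].
Qed.

Lemma is_unit_inG u : is_unit (inG p) u <-> u = 0.
Proof.
have inG_ge0 x : inG p x -> 0 <= x.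
  by case=> s [_ ->]; apply: sumr_ge0 => k _; apply: gen_ge0.
split=> [[/inG_ge0 u_ge0 [v [/inG_ge0 v_ge0 /eqP]]]|->].
  by rewrite paddr_eq0 // => /andP[/eqP].
have inG0 : inG p 0 by exists [::]; rewrite big_nil.
by split=> //; exists 0; rewrite addr0.
Qed.

Lemma is_unit_sum_gen s :
  all pos s -> is_unit (inG p) (\sum_(k <- s) gen p k) <-> s = [::].
Proof.
move=> s_pos; split=> [/is_unit_inG/eqP|->].
  by rewrite sum_gen_eq0 // => /eqP.
by apply/is_unit_inG; rewrite big_nil.
Qed.

Lemma inG_gen n : (0 < n)%N -> inG p (gen p n).
Proof. by move=> n_gt0; exists [:: n]; rewrite big_seq1 /= n_gt0. Qed.

Lemma inG_gen_muln n m : (0 < n)%N -> inG p (gen p n *+ m).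
Proof.
move=> n_gt0; exists (nseq m n); split; first by rewrite all_nseq n_gt0 orbT.
by rewrite big_nseq iter_addr addr0.
Qed.

Lemma gen_muln_den n : (0 < n)%N -> gen p n *+ den n = 1.
Proof. by move=> n_gt0; rewrite -mulr_natl mul_den_gen. Qed.

Lemma prod_den_mul_sum_gen s :
  all pos s -> exists N : nat,
    (\prod_(k <- s) den k)%:R * \sum_(k <- s) gen p k = N%:R.
Proof.
elim: s => [_|k s IHs /= /andP[k_gt0 /IHs[N sumN]]].
  by exists 0%N; rewrite !big_nil mulr0.
exists (\prod_(j <- s) den j + den k * N)%N.
rewrite !big_cons natrM mulrDr mulrAC mul_den_gen // mul1r.
by rewrite -mulrA sumN natrD natrM.
Qed.

Lemma mem_of_dvd_prod_den n s :
  (0 < n)%N -> all pos s -> (p n %| \prod_(k <- s) den k)%N -> n \in s.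
Proof.
move=> n_gt0 /allP s_pos; have [pn_pr pn_odd] := p_prime_odd n_gt0.
rewrite Euclid_dvd_prod // big_has => /hasP[k ks].
have k_gt0 : (0 < k)%N := s_pos k ks.
have [pk_pr _] := p_prime_odd k_gt0.
rewrite Euclid_dvdM // Euclid_dvdX // !dvdn_prime2 //.
case/orP=> [/andP[/eqP pn2 _] | /eqP pnk]; first by rewrite pn2 in pn_odd.
by rewrite (strict_mono_inj_pos p_incr _ _ n_gt0 k_gt0 pnk).
Qed.

Lemma sum_gen_eq_gen s n :
  (0 < n)%N -> all pos s -> \sum_(k <- s) gen p k = gen p n -> s = [:: n].
Proof.
move=> n_gt0 s_pos sum_n.
have ns : n \in s.
  apply: mem_of_dvd_prod_den => //.
  have [N sumN] := prod_den_mul_sum_gen s_pos.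
  have : (\prod_(k <- s) den k)%:R = N%:R * (den n)%:R :> rat.
    by rewrite -sumN sum_n mulfVK ?den_neq0.
  by move/eqP; rewrite -natrM eqr_nat => /eqP ->; rewrite dvdn_mull ?dvdn_mull.
have rem_pos : all pos (rem n s).
  by apply/allP=> k /mem_rem; apply/allP.
have /eqP rem_nil : rem n s == [::].
  rewrite -sum_gen_eq0 //; apply/eqP/(@addrI _ (gen p n)).
  by rewrite addr0 -{2}sum_n (perm_big _ (perm_to_rem ns)) big_cons.
by apply: perm_small_eq => //; rewrite -rem_nil perm_to_rem.
Qed.

Lemma is_atom_gen n : (0 < n)%N -> is_atom (inG p) (gen p n).
Proof.
move=> n_gt0; split; first exact: inG_gen.
split; first by move/is_unit_inG/eqP; rewrite gt_eqF ?gen_gt0.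
case=> _ [_ [[s1 [s1_pos ->]] [[s2 [s2_pos ->]] [s1_unit [s2_unit sum12]]]]].
have s1_ne : s1 <> [::] by move/(is_unit_sum_gen s1_pos)/s1_unit.
have s2_ne : s2 <> [::] by move/(is_unit_sum_gen s2_pos)/s2_unit.
rewrite -big_cat in sum12.
have := sum_gen_eq_gen n_gt0 _ (esym sum12).
rewrite all_cat s1_pos s2_pos => /(_ isT).
move: s1_ne s2_ne; clear.
by case: s1 s2 => [|? [|? ?]] [|? ?].
Qed.

Lemma is_atom_inG a : is_atom (inG p) a <-> exists n, (0 < n)%N /\ a = gen p n.
Proof.
split=> [|[n [n_gt0 ->]]]; last exact: is_atom_gen.
case=> [[[|k s] [/= s_pos ->]] [a_unit a_irr]].
  by case: a_unit; apply/is_unit_inG; rewrite big_nil.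
case/andP: s_pos => k_gt0 s_pos; exists k; split=> //.
case: s s_pos a_irr {a_unit} => [|j s] s_pos a_irr; first by rewrite big_seq1.
case: a_irr; exists (gen p k), (\sum_(i <- j :: s) gen p i).
rewrite big_cons; do !split=> //; first exact: inG_gen.
- by exists (j :: s).
- by move/is_unit_inG/eqP; rewrite gt_eqF ?gen_gt0.
- by move/(is_unit_sum_gen s_pos).
Qed.

Lemma inG1 : inG p 1.
Proof. by rewrite -(@gen_muln_den 1) //; apply: inG_gen_muln. Qed.

Lemma is_factorization_nseq_gen n :
  (0 < n)%N -> is_factorization (inG p) 1 (nseq (den n) (gen p n)).
Proof.
move=> n_gt0; split; first by move=> a /nseqP[-> _]; apply: is_atom_gen.
by rewrite big_nseq iter_addr addr0 gen_muln_den.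
Qed.

Lemma ltn_den n : (0 < n)%N -> (n < den n)%N.
Proof.
move=> n_gt0; have [p_pr _] := p_prime_odd n_gt0.
by rewrite (leq_trans (ltn_expl n (ltnSn 1))) // leq_pmulr // prime_gt0.
Qed.

Lemma not_BFM : ~ BFM (inG p).
Proof.
move=> /(_ 1 inG1) [_ [L lengths]].
pose n := (\max_(l <- L) l).+1.
have := lengths _ (is_factorization_nseq_gen (ltn0Sn _ : (0 < n)%N)).
rewrite size_nseq => /(@leq_bigmax_seq _ _ xpredT id) /(_ isT) den_le_max.
by have := leq_trans (ltn_den (ltn0Sn _)) den_le_max; rewrite ltnNge leqnSn.
Qed.

Lemma gen_divides_one n : (0 < n)%N -> divides_in (inG p) (gen p n) 1.
Proof.
move=> n_gt0; exists (gen p n *+ (den n).-1); split; first exact: inG_gen_muln.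
by rewrite -mulrS prednK ?den_gt0 ?gen_muln_den.
Qed.

Lemma not_IDF : ~ IDF (inG p).
Proof.
move=> /(_ 1 inG1) [l atoms_in_l].
have gens_in_l : {subset map (gen p) (iota 1 (size l).+1) <= l}.
  move=> _ /mapP[n /[!mem_iota] /andP[n_gt0 _] ->].
  exact: atoms_in_l (is_atom_gen n_gt0) (gen_divides_one n_gt0).
suff /uniq_leq_size/(_ gens_in_l) : uniq (map (gen p) (iota 1 (size l).+1)).
  by rewrite size_map size_iota ltnn.
rewrite map_inj_in_uniq ?iota_uniq // => i j.
by rewrite !mem_iota => /andP[i_gt0 _] /andP[j_gt0 _]; apply: gen_inj.
Qed.

End PrimeReciprocalMonoid.

Theorem mainTheorem8 (p : nat -> nat)
  (hprime : forall n : nat, (1 <= n)%N -> prime (p n) /\ odd (p n))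
  (hincr : forall m n : nat, (1 <= m)%N -> (m < n)%N -> (p m < p n)%N) :
  (forall a : rat, is_atom (inG p) a <-> exists n : nat, (1 <= n)%N /\ a = gen p n)
  /\ ~ BFM (inG p) /\ ~ IDF (inG p).
Proof.
split; first exact: is_atom_inG hprime hincr.
by split; [apply: not_BFM hprime hincr | apply: not_IDF hprime hincr].
Qed.
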